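(* Let $n\geq 2$, $\mathfrak g=\mathfrak{sl}(n+1,\mathbb R)$ with the $|1|$-grading $\mathfrak g=\mathfrak g_{-1}\oplus\mathfrak g_0\oplus\mathfrak g_1$ described below, and let $0\neq Z\in\mathfrak g_1$. Then $$0=C(Z)\subset F(Z)=\{X\in\mathfrak g_{-1}: ZX=0\},\qquad T(Z)=\{X\in\mathfrak g_{-1}: ZX=1\}.$$ Moreover, for every $X\in T(Z)$ the element $A=[Z,X]\in\mathfrak g_0$ acts diagonalizably on $\mathfrak g_{-1}$ and on $\mathbb W$, and: (1) for each $X\in T(Z)$ all eigenvalues of $A$ on $\mathfrak g_{-1}$ are non-positive and the $0$-eigenspace of $A$ on $\mathfrak g_{-1}$ coincides with $C(Z)$; (2) for each $X\in T(Z)$, $\mathbb W_{ss}(A)=0$; (3) $\bigcap_{X\in T(Z)}\mathbb W_{st}(A)=0$.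
   Context: Write elements of $\mathfrak{sl}(n+1,\mathbb R)$ in block form with blocks of sizes $1$ and $n$ as $\begin{pmatrix}-\mathrm{tr}(A) & Z\\ X & A\end{pmatrix}$ with $X\in\mathbb R^n$ (column), $A\in\mathfrak{gl}(n,\mathbb R)$, $Z\in\mathbb R^{n*}$ (row). The grading components $\mathfrak g_{-1},\mathfrak g_0,\mathfrak g_1$ are the parts given by $X$, $A$ and $Z$ respectively, and the bracket is the matrix commutator; for $Z\in\mathfrak g_1$, $X\in\mathfrak g_{-1}$, $ZX$ denotes the real number given by the matrix product. For $Z\in\mathfrak g_1$ define $C(Z)=\{X\in\mathfrak g_{-1}:[X,Z]=0\}$, $F(Z)=\{X\in\mathfrak g_{-1}:[X,[X,Z]]=0\}$, and $T(Z)=\{X\in\mathfrak g_{-1}:[[Z,X],X]=-2X,\ [[Z,X],Z]=2Z\}$. The group $G_0\cong GL(n,\mathbb R)$ acts on $\mathfrak g_{\pm1}$ by the adjoint action. $\mathbb W$ denotes the representation of $\mathfrak g_0$ in which the harmonic curvature of projective structures takes values: for $n>2$ it is the subrepresentation of $\Lambda^2\mathfrak g_1\otimes\mathfrak{sl}(\mathfrak g_{-1})$ of projective Weyl curvature tensors (totally trace-free curvature-type tensors); for $n=2$ it is the subrepresentation of $\Lambda^2\mathfrak g_1\otimes\mathfrak g_1$ in which the projective Cotton–York tensor takes values. For $A\in\mathfrak g_0$ acting diagonalizably on a representation $\mathbb W$, $\mathbb W_{ss}(A)$ (resp. $\mathbb W_{st}(A)$) is the sum of eigenspaces of $A$ with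 negative (resp. non-positive) eigenvalues. *)

(* g = sl(n+1,R) realised as (1+n)x(1+n) real matrices in
   block form (blocks of size 1 and n); R : realType stands for the reals. *)
From HB Require Import structures.
From mathcomp Require Import all_boot all_order all_algebra.
From mathcomp Require Export reals.
Set Implicit Arguments. Unset Strict Implicit. Unset Printing Implicit Defensive.
Import Order.TTheory GRing.Theory Num.Theory.
Local Open Scope ring_scope.

Section Defs.
Variables (R : realType) (n : nat).

Definition br (A B : 'M[R]_(1 + n)) : 'M[R]_(1 + n) := A *m B - B *m A.

Definition gm1 (X : 'cV[R]_n) : 'M[R]_(1 + n) := block_mx 0 0 X 0.
Definition g1 (Z : 'rV[R]_n) : 'M[R]_(1 + n) := block_mx 0 Z 0 0.

Definition pair (Z : 'rV[R]_n) (X : 'cV[R]_n) : R := (Z *m X) 0 0.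

Definition inC (Z : 'rV[R]_n) (X : 'cV[R]_n) : Prop := br (gm1 X) (g1 Z) = 0.
Definition inF (Z : 'rV[R]_n) (X : 'cV[R]_n) : Prop :=
  br (gm1 X) (br (gm1 X) (g1 Z)) = 0.
Definition inT (Z : 'rV[R]_n) (X : 'cV[R]_n) : Prop :=
  br (br (g1 Z) (gm1 X)) (gm1 X) = - 2%:R *: gm1 X /\
  br (br (g1 Z) (gm1 X)) (g1 Z) = 2%:R *: g1 Z.

Definition em1 (j : 'I_n) : 'cV[R]_n := delta_mx j 0.
Definition e1 (j : 'I_n) : 'rV[R]_n := delta_mx 0 j.

(* matrices of ad(A) on g_{-1} and on g_1 in these bases (for A in g_0):
   Bm A k m = coefficient of e_k in [A, e_m];
   Cm A p i = coefficient of eps^p in [A, eps^i]. *)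
Definition Bm (A : 'M[R]_(1 + n)) : 'M[R]_n :=
  \matrix_(k, m) (dlsubmx (br A (gm1 (em1 m)))) k 0.
Definition Cm (A : 'M[R]_(1 + n)) : 'M[R]_n :=
  \matrix_(p, i) (ursubmx (br A (g1 (e1 i)))) 0 p.

(* ---- n > 2 : projective Weyl tensors in Lambda^2 g_1 (x) sl(g_{-1}) ----
   R[i,j,k,l] = component of eps^i (x) eps^j (x) e_k (x) eps^l, i.e.
   R(X,Y)W = sum R[i,j,k,l] X^i Y^j W^l e_k. *)
Definition tens4 := {ffun 'I_n * 'I_n * 'I_n * 'I_n -> R^o}.

Definition inWeyl (T : tens4) : Prop :=
  (* in Lambda^2 g_1 (x) gl(g_{-1}) *)
  (forall i j k l, T (i, j, k, l) = - T (j, i, k, l)) /\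
  (* values in sl(g_{-1}) *)
  (forall i j, \sum_k T (i, j, k, k) = 0) /\
  (* curvature type: algebraic Bianchi identity *)
  (forall i j k l, T (i, j, k, l) + T (j, l, k, i) + T (l, i, k, j) = 0) /\
  (* totally trace-free: the remaining traces vanish *)
  (forall j l, \sum_k T (k, j, k, l) = 0) /\
  (forall i l, \sum_k T (i, k, k, l) = 0).

Definition actWeyl (A : 'M[R]_(1 + n)) (T : tens4) : tens4 :=
  [ffun t => let: (p, q, r, s) := t in
     \sum_m (Cm A p m * T (m, q, r, s) + Cm A q m * T (p, m, r, s)
             + Bm A r m * T (p, q, m, s) + Cm A s m * T (p, q, r, m))].

(* ---- n = 2 : values of the Cotton-York tensor, Lambda^2 g_1 (x) g_1 ---- *)
Definition tens3 := {ffun 'I_n * 'I_n * 'I_n -> R^o}.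

Definition inCY (T : tens3) : Prop :=
  forall i j l, T (i, j, l) = - T (j, i, l).

Definition actCY (A : 'M[R]_(1 + n)) (T : tens3) : tens3 :=
  [ffun t => let: (p, q, s) := t in
     \sum_m (Cm A p m * T (m, q, s) + Cm A q m * T (p, m, s)
             + Cm A s m * T (p, q, m))].

End Defs.

Definition sum_of_eig (R : realType) (V : lmodType R)
    (eig : R -> V -> Prop) (Q : R -> Prop) (v : V) : Prop :=
  exists (m : nat) (l : 'I_m -> R) (w : 'I_m -> V),
    (forall k, Q (l k) /\ eig (l k) (w k)) /\ v = \sum_k w k.

Definition eig_on (R : realType) (V : lmodType R) (P : V -> Prop)
    (f : V -> V) (l : R) (v : V) : Prop := P v /\ f v = l *: v.

Definition diag_on (R : realType) (V : lmodType R) (P : V -> Prop)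
    (f : V -> V) : Prop :=
  forall v, P v -> sum_of_eig (eig_on P f) (fun _ => True) v.

Definition in_ss (R : realType) (V : lmodType R) (P : V -> Prop)
    (f : V -> V) (v : V) : Prop := sum_of_eig (eig_on P f) (fun l => l < 0) v.
Definition in_st (R : realType) (V : lmodType R) (P : V -> Prop)
    (f : V -> V) (v : V) : Prop := sum_of_eig (eig_on P f) (fun l => l <= 0) v.

(* The statements about W for a given model (V, inW, act) of the representation W *)
Definition W_claims (R : realType) (n : nat) (Z : 'rV[R]_n) (V : lmodType R)
    (inW : V -> Prop) (act : 'M[R]_(1 + n) -> V -> V) : Prop :=
  (forall X, inT Z X -> diag_on inW (act (br (g1 Z) (gm1 X)))) /\
  (forall X, inT Z X -> forall w, in_ss inW (act (br (g1 Z) (gm1 X))) w -> w = 0) /\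
  (forall w, (forall X, inT Z X -> in_st inW (act (br (g1 Z) (gm1 X))) w) -> w = 0).

(* For X in T(Z) the element A = [Z, X] is the block diagonal matrix diag(ZX, -XZ)
   with ZX = 1, and P = XZ is an idempotent of rank one.  Hence A acts on g_{-1} by
   -(P + 1), with eigenvalues -1 (on ker Z) and -2 (on RX), and on g_1 by (P + 1)^T,
   with eigenvalues 1 and 2.  On a tensor space A acts as a sum of commuting operators,
   one per slot, each annihilated by a split polynomial with distinct roots; so the sum
   is diagonalizable and its eigenvalues are sums of slot eigenvalues.  These are at
   least 1 + 1 - 2 + 1 = 1 on Weyl tensors and at least 3 on Cotton-York tensors, so
   already W_st(A) = 0 for each single X in the nonempty set T(Z). *)

From HB Require Import structures.
From mathcomp Require Import all_boot all_order all_algebra.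
From mathcomp Require Import reals.
From mathcomp Require Import ring lra.
Set Implicit Arguments. Unset Strict Implicit. Unset Printing Implicit Defensive.
Import Order.TTheory GRing.Theory Num.Theory.
Local Open Scope ring_scope.

Section SumOfEigenvectors.
Variables (R : realType) (V : lmodType R).
Implicit Types (E : R -> V -> Prop) (Q : R -> Prop).

Lemma sum_of_eig0 E Q : sum_of_eig E Q 0.
Proof. by exists 0%N, (fun=> 0), (fun=> 0); split; [case | rewrite big_ord0]. Qed.

Lemma sum_of_eig1 E Q l v : Q l -> E l v -> sum_of_eig E Q v.
Proof. by move=> Ql Elv; exists 1%N, (fun=> l), (fun=> v); rewrite big_ord1. Qed.

Lemma sum_of_eigD E Q u v :
  sum_of_eig E Q u -> sum_of_eig E Q v -> sum_of_eig E Q (u + v).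
Proof.
move=> [m1 [l1 [w1 [H1 ->]]]] [m2 [l2 [w2 [H2 ->]]]].
pose l k := match split k with inl i => l1 i | inr j => l2 j end.
pose w k := match split k with inl i => w1 i | inr j => w2 j end.
exists (m1 + m2)%N, l, w; split; first by move=> k; rewrite /l /w; case: split.
rewrite big_split_ord; congr (_ + _); apply: eq_bigr => i _.
  by rewrite /w (unsplitK (inl i : 'I_m1 + 'I_m2)).
by rewrite /w (unsplitK (inr i : 'I_m1 + 'I_m2)).
Qed.

Lemma sum_of_eig_sum E Q m (F : 'I_m -> V) :
  (forall k, sum_of_eig E Q (F k)) -> sum_of_eig E Q (\sum_k F k).
Proof.
elim: m F => [|m IH] F HF; first by rewrite big_ord0; apply: sum_of_eig0.
by rewrite big_ord_recr /=; apply: sum_of_eigD => //; apply: IH.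
Qed.

Lemma sum_of_eigW E E' Q Q' v : sum_of_eig E Q v ->
  (forall l w, Q l -> E l w -> Q' l /\ E' l w) -> sum_of_eig E' Q' v.
Proof.
move=> [m [l [w [Hw ->]]]] H; exists m, l, w; split => // k.
by case: (Hw k) => ? ?; apply: H.
Qed.

Lemma sum_of_eig_eq0 E Q v :
  (forall l w, Q l -> E l w -> w = 0) -> sum_of_eig E Q v -> v = 0.
Proof.
move=> H [m [l [w [Hw ->]]]]; apply: big1 => k _.
by case: (Hw k) => ? ?; apply: H (l k) _ _ _.
Qed.

End SumOfEigenvectors.

Section SplitAnnihilator.
Variables (R : realType) (V : lmodType R).

(* [prod_shift f L v] is [(\prod_(mu <- L) (f - mu)) v]. *)
Definition prod_shift (f : V -> V) (L : seq R) (v : V) : V :=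
  foldr (fun mu w => f w - mu *: w) v L.

Lemma eq_prod_shift (f g : V -> V) L : f =1 g -> prod_shift f L =1 prod_shift g L.
Proof. by move=> fg v; elim: L => //= mu L ->; rewrite fg. Qed.

Variable f : {linear V -> V}.

Fact prod_shift_is_linear L : linear (prod_shift f L).
Proof.
move=> c u v; elim: L => //= mu L ->.
by rewrite linearP scalerDr scalerA mulrC -scalerA opprD addrACA -scalerBr.
Qed.

HB.instance Definition _ L :=
  GRing.isLinear.Build R V V *:%R (prod_shift f L) (prod_shift_is_linear L).

Lemma prod_shift_eig L mu v : f v = mu *: v ->
  prod_shift f L v = (\prod_(x <- L) (mu - x)) *: v.
Proof.
move=> fv; elim: L => [|x L IH] /=; first by rewrite big_nil scale1r.
by rewrite IH linearZZ fv big_cons !scalerA -scalerBl; congr (_ *: _); ring.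
Qed.

Lemma prod_shift_eig_eq0 L l v :
  prod_shift f L v = 0 -> f v = l *: v -> l \notin L -> v = 0.
Proof.
move=> Lv0 /(prod_shift_eig L) Lv lL; move: Lv0; rewrite Lv => /eqP.
rewrite scaler_eq0 => /orP [|/eqP //].
rewrite prodf_seq_eq0 => /hasP [x xL /=]; rewrite subr_eq0 => /eqP lx.
by move: lL; rewrite lx xL.
Qed.

Lemma prod_shift_of_sum_of_eig (P : V -> Prop) (L : seq R) v :
  sum_of_eig (eig_on P f) (fun l => l \in L) v -> prod_shift f L v = 0.
Proof.
move=> [m [l [w [Hw ->]]]]; rewrite linear_sum; apply: big1 => k _ /=.
case: (Hw k) => lL [_ /(prod_shift_eig L) ->].
by rewrite (big_rem (l k)) //= subrr mul0r scale0r.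
Qed.

Variable P : V -> Prop.
Hypotheses (PZ : forall c v, P v -> P (c *: v))
  (PB : forall u v, P u -> P v -> P (u - v)) (Pf : forall v, P v -> P (f v)).

Lemma P_prod_shift L v : P v -> P (prod_shift f L v).
Proof. by move=> Pv; elim: L => //= mu L IH; apply: PB; [apply: Pf | apply: PZ]. Qed.

(* Splitting off the [mu]-eigencomponent [q^-1 *: prod_shift f L v], where [q] is
   the value at [mu] of the product over the remaining roots. *)
Lemma sum_of_eig_prod_shift L v : uniq L -> P v -> prod_shift f L v = 0 ->
  sum_of_eig (eig_on P f) (fun l => l \in L) v.
Proof.
elim: L v => [|mu L IH] v /=; first by move=> _ _ ->; apply: sum_of_eig0.
move=> /andP [muL uL] Pv /eqP; rewrite subr_eq0 => /eqP fy.
set y := prod_shift f L v in fy.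
set q := \prod_(x <- L) (mu - x).
have q0 : q != 0.
  rewrite prodf_seq_neq0; apply/allP => x xL /=; rewrite subr_eq0.
  by apply: contraNneq muL => ->.
set u := q^-1 *: y.
have Pu : P u by apply/PZ/P_prod_shift.
rewrite -(subrK u v) addrC; apply: sum_of_eigD.
  apply: (@sum_of_eig1 _ _ _ _ mu); first exact: mem_head.
  by split => //; rewrite /u linearZZ fy !scalerA mulrC.
apply: (@sum_of_eigW _ _ (eig_on P f) _ (fun l => l \in L)); last first.
  by move=> l w lL ew; split=> //; rewrite inE lL orbT.
apply: IH => //; first exact: PB.
by rewrite linearB /u linearZZ /= (prod_shift_eig L fy) scalerA mulVf // scale1r subrr.
Qed.

End SplitAnnihilator.

Section CommutingSum.
Variables (R : realType) (V : lmodType R).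

Definition annihilated_by (f : V -> V) (L : seq R) := forall v, prod_shift f L v = 0.

Definition commuting (g h : V -> V) := forall v, g (h v) = h (g v).

Definition sumset (La Lb : seq R) := undup [seq x + y | x <- La, y <- Lb].

Lemma sumset_uniq La Lb : uniq (sumset La Lb).
Proof. exact: undup_uniq. Qed.

Lemma sumset_ge a b La Lb :
  (forall x, x \in La -> a <= x) -> (forall y, y \in Lb -> b <= y) ->
  forall z, z \in sumset La Lb -> a + b <= z.
Proof.
move=> HA HB z; rewrite mem_undup => /allpairsP [[x y] [/= xA yB ->]].
by rewrite lerD ?HA ?HB.
Qed.

Lemma mem_seq2_ge (c a b x : R) : c <= a -> c <= b -> x \in [:: a; b] -> c <= x.
Proof. by move=> ca cb; rewrite !inE => /orP [] /eqP ->. Qed.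

Lemma commuting_addl (h1 h2 g : {linear V -> V}) :
  commuting h1 g -> commuting h2 g -> commuting (h1 \+ h2) g.
Proof. by move=> c1 c2 v; rewrite /= linearD c1 c2. Qed.

(* The eigenspaces of [g] are [h]-stable, so [h] diagonalises inside each of them. *)
Lemma annihilated_by_add (g h : {linear V -> V}) La Lb :
  uniq La -> uniq Lb -> commuting g h ->
  annihilated_by g La -> annihilated_by h Lb -> annihilated_by (g \+ h) (sumset La Lb).
Proof.
move=> uA uB gh gA hB v; apply: (prod_shift_of_sum_of_eig (P := fun=> True)).
have [m [l [w [Hw ->]]]] :=
  @sum_of_eig_prod_shift _ _ g (fun=> True) (fun _ _ _ => I) (fun _ _ _ _ => I)
    (fun _ _ => I) La v uA I (gA v).
apply: sum_of_eig_sum => k; case: (Hw k) => lA [_ gw].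
have [|||m' [l' [w' [Hw' ->]]]] := @sum_of_eig_prod_shift _ _ h
  (fun u => g u = l k *: u) _ _ _ Lb (w k) uB gw (hB _).
- by move=> c u gu; rewrite linearZZ gu !scalerA mulrC.
- by move=> u u' gu gu'; rewrite linearB gu gu' scalerBr.
- by move=> u gu; rewrite gh gu linearZZ.
apply: sum_of_eig_sum => j; case: (Hw' j) => lB [gj hj].
apply: (@sum_of_eig1 _ _ _ _ (l k + l' j)); first by rewrite mem_undup allpairs_f.
by split => //=; rewrite gj hj scalerDl.
Qed.

Lemma positive_spectrum (f : {linear V -> V}) (P : V -> Prop)
    (PZ : forall c v, P v -> P (c *: v)) (PB : forall u v, P u -> P v -> P (u - v))
    (Pf : forall v, P v -> P (f v)) L :
  uniq L -> annihilated_by f L -> (forall l, l \in L -> 0 < l) ->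
  diag_on P f /\ (forall w, in_st P f w -> w = 0).
Proof.
move=> uL fL Lpos; split=> [v Pv | w].
  by apply: sum_of_eigW (sum_of_eig_prod_shift PZ PB Pf uL Pv (fL v)) _.
apply: sum_of_eig_eq0 => l u l_le0 [_ fu]; apply: prod_shift_eig_eq0 (fL u) fu _.
by apply: contraL l_le0 => /Lpos; rewrite -ltNge.
Qed.

End CommutingSum.

Section SlotAction.
Variables (R : realType) (n : nat) (I : finType).

(* [K] acts on the slot of [t : I] that [pr] reads and [upd] overwrites. *)
Definition slot (pr : I -> 'I_n) (upd : I -> 'I_n -> I) (K : 'M[R]_n)
    (T : {ffun I -> R^o}) : {ffun I -> R^o} :=
  [ffun t => \sum_m K (pr t) m * T (upd t m)].

Fact slot_is_linear pr upd K : linear (slot pr upd K).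
Proof.
move=> c S T; apply/ffunP => t; rewrite !ffunE scaler_sumr -big_split /=.
by apply: eq_bigr => m _; rewrite !ffunE mulrDr scalerAr.
Qed.

HB.instance Definition _ pr upd K :=
  GRing.isLinear.Build R _ _ *:%R (slot pr upd K) (slot_is_linear pr upd K).

Lemma commuting_slot pr1 upd1 pr2 upd2 K1 K2 :
  (forall t m, pr1 (upd2 t m) = pr1 t) -> (forall t m, pr2 (upd1 t m) = pr2 t) ->
  (forall t m m', upd1 (upd2 t m) m' = upd2 (upd1 t m') m) ->
  commuting (slot pr1 upd1 K1) (slot pr2 upd2 K2).
Proof.
move=> pr1K pr2K updC T; apply/ffunP => t; rewrite !ffunE.
under eq_bigr => m _ do rewrite ffunE pr2K mulr_sumr.
under [RHS]eq_bigr => m _ do rewrite ffunE pr1K mulr_sumr.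
by rewrite exchange_big; apply: eq_bigr => m _; apply: eq_bigr => m' _; rewrite updC mulrCA.
Qed.

Variables (pr : I -> 'I_n) (upd : I -> 'I_n -> I).
Hypotheses (pr_upd : forall t m, pr (upd t m) = m)
  (upd_upd : forall t m m', upd (upd t m) m' = upd t m')
  (upd_pr : forall t, upd t (pr t) = t).

Lemma slot_mul K1 K2 T : slot pr upd K1 (slot pr upd K2 T) = slot pr upd (K1 *m K2) T.
Proof.
apply/ffunP => t; rewrite !ffunE.
under eq_bigr => m _ do rewrite ffunE pr_upd mulr_sumr.
rewrite exchange_big; apply: eq_bigr => m' _ /=.
by rewrite mxE mulr_suml; apply: eq_bigr => m _; rewrite upd_upd mulrA.
Qed.

Lemma slot_sub_scalar K a T : slot pr upd (K - a%:M) T = slot pr upd K T - a *: T.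
Proof.
apply/ffunP => t; rewrite !ffunE.
under eq_bigr => m _ do rewrite !mxE mulrBl.
rewrite sumrB; congr (_ - _); rewrite (bigD1 (pr t)) //= big1 => [|m mt].
  by rewrite eqxx mulr1n upd_pr addr0.
by rewrite eq_sym (negbTE mt) mulr0n mul0r.
Qed.

Lemma annihilated_by_slot K a b : (K - a%:M) *m (K - b%:M) = 0 ->
  annihilated_by (slot pr upd K) [:: a; b].
Proof.
move=> Kab T /=; rewrite -!slot_sub_scalar slot_mul Kab.
by apply/ffunP => t; rewrite !ffunE big1 // => m _; rewrite mxE mul0r.
Qed.

End SlotAction.

Section GradedBrackets.
Variables (R : realType) (n : nat).
Implicit Types (X Y : 'cV[R]_n) (Z W : 'rV[R]_n) (d : 'M[R]_1) (M : 'M[R]_n).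

Lemma brC (A B : 'M[R]_(1 + n)) : br A B = - br B A.
Proof. by rewrite /br opprB. Qed.

Lemma brNl (A B : 'M[R]_(1 + n)) : br (- A) B = - br A B.
Proof. by rewrite /br mulNmx mulmxN opprK opprB addrC. Qed.

Lemma br_g1_gm1 Z X : br (g1 Z) (gm1 X) = block_mx (Z *m X) 0 0 (- (X *m Z)).
Proof.
by rewrite /br /gm1 /g1 !mulmx_block !(mulmx0, mul0mx, addr0, add0r) opp_block_mx
  add_block_mx !(oppr0, addr0, add0r).
Qed.

Lemma br_diag_gm1 d M Y : br (block_mx d 0 0 M) (gm1 Y) = gm1 (M *m Y - Y *m d).
Proof.
by rewrite /br /gm1 !mulmx_block !(mulmx0, mul0mx, addr0, add0r) opp_block_mx
  add_block_mx !(oppr0, addr0, add0r, subrr).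
Qed.

Lemma br_diag_g1 d M W : br (block_mx d 0 0 M) (g1 W) = g1 (d *m W - W *m M).
Proof.
by rewrite /br /g1 !mulmx_block !(mulmx0, mul0mx, addr0, add0r) opp_block_mx
  add_block_mx !(oppr0, addr0, add0r, subrr).
Qed.

Lemma pairE Z X : Z *m X = (pair Z X)%:M.
Proof. exact: mx11_scalar. Qed.

Lemma pairZr Z c X : pair Z (c *: X) = c * pair Z X.
Proof. by rewrite /pair -scalemxAr mxE. Qed.

Lemma pairBr Z X Y : pair Z (X - Y) = pair Z X - pair Z Y.
Proof. by rewrite /pair mulmxBr !mxE. Qed.

Lemma pair0r Z : pair Z 0 = 0.
Proof. by rewrite /pair mulmx0 mxE. Qed.

Lemma pair_em1 Z (j : 'I_n) : pair Z (em1 R j) = Z 0 j.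
Proof. by rewrite /pair -colE mxE. Qed.

Lemma pair_e1 (j : 'I_n) X : pair (e1 R j) X = X j 0.
Proof. by rewrite /pair -rowE mxE. Qed.

Lemma ad_brZX_gm1 Z X Y :
  br (br (g1 Z) (gm1 X)) (gm1 Y) = gm1 (- (pair Z Y *: X) - pair Z X *: Y).
Proof.
by rewrite br_g1_gm1 br_diag_gm1 mulNmx -mulmxA !pairE mul_mx_scalar mul_mx_scalar.
Qed.

Lemma ad_brZX_g1 Z X W :
  br (br (g1 Z) (gm1 X)) (g1 W) = g1 (pair Z X *: W + pair W X *: Z).
Proof.
by rewrite br_g1_gm1 br_diag_g1 mulmxN opprK mulmxA !pairE !mul_scalar_mx.
Qed.

Lemma gm1_inj : injective (@gm1 R n).
Proof. by move=> X Y /eq_block_mx [_ _ ->]. Qed.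

Lemma g1_inj : injective (@g1 R n).
Proof. by move=> Z W /eq_block_mx [_ ->]. Qed.

Lemma scale_gm1 c X : c *: gm1 X = gm1 (c *: X).
Proof. by rewrite /gm1 scale_block_mx !scaler0. Qed.

Lemma scale_g1 c Z : c *: g1 Z = g1 (c *: Z).
Proof. by rewrite /g1 scale_block_mx !scaler0. Qed.

Lemma gm1_eq0 X : gm1 X = 0 -> X = 0.
Proof. by rewrite -(block_mx0 _ 1 n 1 n) => /eq_block_mx [_ _ ->]. Qed.

Lemma scale_pair_eq0 Z c X : c *: X = 0 -> c * pair Z X = 0.
Proof. by rewrite -pairZr => ->; rewrite pair0r. Qed.

Lemma idempotent_affine_roots (P : 'M[R]_n) s a b : P *m P = P -> b = s + a ->
  (s *: P + a%:M - a%:M) *m (s *: P + a%:M - b%:M) = 0.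
Proof.
move=> PP ->; rewrite addrK [(s + a)%:M]raddfD /= [s%:M + _]addrC addrKA.
rewrite -scalemx1 -scalerBr -scalemxAl -scalemxAr mulmxBr mulmx1 PP subrr.
by rewrite !scaler0.
Qed.

Variables (Z : 'rV[R]_n) (hZ : Z != 0).

Lemma inC_iff X : inC Z X <-> X = 0.
Proof.
rewrite /inC brC br_g1_gm1; split=> [/eqP | ->]; last first.
  by rewrite mul0mx mulmx0 oppr0 block_mx0 oppr0.
rewrite oppr_eq0 -(block_mx0 _ 1 n 1 n) => /eqP /eq_block_mx [_ _ _ /eqP].
have Zfree : row_free Z by rewrite /row_free rank_rV hZ.
by rewrite oppr_eq0 mulmx_free_eq0 // => /eqP.
Qed.

Lemma inF_iff X : inF Z X <-> pair Z X = 0.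
Proof.
rewrite /inF; have -> : br (gm1 X) (br (gm1 X) (g1 Z)) = br (br (g1 Z) (gm1 X)) (gm1 X).
  by rewrite brC [br (gm1 X) (g1 Z)]brC brNl opprK.
rewrite ad_brZX_gm1 -scaleNr -scalerDl; split=> [/gm1_eq0 | ->].
  by move/(scale_pair_eq0 Z)/eqP; rewrite mulf_eq0 => /orP [/eqP|/eqP //]; lra.
by rewrite oppr0 addr0 scale0r /gm1 block_mx0.
Qed.

Lemma inT_iff X : inT Z X <-> pair Z X = 1.
Proof.
rewrite /inT !ad_brZX_gm1 ad_brZX_g1 scale_gm1 scale_g1 -scaleNr -!scalerDl.
split=> [[_ /g1_inj /eqP] | ->]; last first.
  by split; congr (_ (_ *: _)); lra.
rewrite -subr_eq0 -scalerBl scaler_eq0 (negbTE hZ) orbF => /eqP; lra.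
Qed.

Lemma exists_inT : exists X, pair Z X = 1.
Proof.
have [j Zj] : exists j, Z 0 j != 0.
  apply/existsP; apply: contraNT hZ; rewrite negb_exists => /forallP Z0.
  by apply/eqP/rowP => j; rewrite mxE; apply/eqP; rewrite -[_ == _]negbK Z0.
by exists ((Z 0 j)^-1 *: em1 R j); rewrite pairZr pair_em1 mulVf.
Qed.

Section Transversal.
Variables (X : 'cV[R]_n) (hZX : pair Z X = 1).
Local Notation A := (br (g1 Z) (gm1 X)).

Lemma ad_brZX_gm1_T Y : br A (gm1 Y) = gm1 (- (pair Z Y *: X) - Y).
Proof. by rewrite ad_brZX_gm1 hZX scale1r. Qed.

Lemma eigenvalue_brZX_gm1 l Y : Y != 0 ->
  br A (gm1 Y) = l *: gm1 Y -> l = -1 \/ l = -2.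
Proof.
move=> Y0; rewrite ad_brZX_gm1_T scale_gm1 => /gm1_inj E.
have /eqP : (l + 2) * pair Z Y = 0.
  by have := congr1 (pair Z) E; rewrite pairBr -scaleNr !pairZr hZX; lra.
rewrite mulf_eq0 => /orP [/eqP|/eqP ZY]; first by right; lra.
left; move: E; rewrite ZY scale0r oppr0 sub0r => /eqP.
by rewrite -scaleN1r -subr_eq0 -scalerBl scaler_eq0 (negbTE Y0) orbF => /eqP; lra.
Qed.

Lemma kernel_brZX_gm1 Y : br A (gm1 Y) = 0 <-> Y = 0.
Proof.
split=> [A0 | ->]; last by rewrite /gm1 block_mx0 /br mulmx0 mul0mx subrr.
apply/eqP; apply/negPn/negP => Y0.
by move: A0; rewrite -(scale0r (gm1 Y)) => /(eigenvalue_brZX_gm1 Y0) []; lra.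
Qed.

(* [Y] splits into its component along [X] and a component in [ker Z]. *)
Lemma sum_of_eig_brZX_gm1 Y :
  sum_of_eig (fun l Y' => br A (gm1 Y') = l *: gm1 Y') (fun=> True) Y.
Proof.
rewrite -(subrK (pair Z Y *: X) Y); apply: sum_of_eigD.
  apply: (@sum_of_eig1 _ _ _ _ (-1)) => //.
  rewrite ad_brZX_gm1_T scale_gm1 pairBr pairZr hZX mulr1 subrr.
  by rewrite scale0r oppr0 sub0r scaleN1r.
apply: (@sum_of_eig1 _ _ _ _ (-2)) => //.
rewrite ad_brZX_gm1_T scale_gm1 pairZr hZX mulr1; congr gm1.
by rewrite scalerA -!scaleNr -scalerDl; congr (_ *: _); lra.
Qed.

Lemma Bm_brZX : Bm A = (-1) *: (X *m Z) + (-1)%:M.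
Proof.
apply/matrixP => k m; rewrite mxE ad_brZX_gm1_T /gm1 block_mxKdl pair_em1.
by rewrite !mxE big_ord1 eqxx andbT mulN1r mulrC -mulNrn.
Qed.

Lemma Cm_brZX : Cm A = (X *m Z)^T + 1%:M.
Proof.
apply/matrixP => p i; rewrite mxE ad_brZX_g1 hZX /g1 block_mxKur.
by rewrite !mxE big_ord1 eqxx /= pair_e1 !mul1r addrC.
Qed.

Lemma Cm_Bm_brZX p i : Cm A p i = - Bm A i p.
Proof. by rewrite Cm_brZX Bm_brZX !mxE (eq_sym p i) mulN1r mulNrn opprD !opprK. Qed.

Lemma rank_one_idem : X *m Z *m (X *m Z) = X *m Z.
Proof. by rewrite mulmxA -(mulmxA X) pairE hZX mulmx1. Qed.

Lemma Bm_brZX_roots : (Bm A - (-1)%:M) *m (Bm A - (-2)%:M) = 0.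
Proof. by rewrite Bm_brZX; apply: idempotent_affine_roots rank_one_idem _; lra. Qed.

Lemma Cm_brZX_roots : (Cm A - 1%:M) *m (Cm A - 2%:M) = 0.
Proof.
rewrite Cm_brZX -[(X *m Z)^T]scale1r; apply: idempotent_affine_roots; last by lra.
by rewrite -trmx_mul rank_one_idem.
Qed.

End Transversal.
End GradedBrackets.

Section WeylSlots.
Variables (R : realType) (n : nat).
Local Notation I4 := ('I_n * 'I_n * 'I_n * 'I_n)%type.

Definition coord4 (i : 'I_4) (t : I4) : 'I_n :=
  let: (p, q, r, s) := t in
  match val i with 0 => p | 1 => q | 2 => r | _ => s end%N.

Definition set_coord4 (i : 'I_4) (t : I4) (m : 'I_n) : I4 :=
  let: (p, q, r, s) := t in
  match val i with
  | 0 => (m, q, r, s) | 1 => (p, m, r, s) | 2 => (p, q, m, s) | _ => (p, q, r, m)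
  end%N.

Local Notation slot4 i := (@slot R n _ (coord4 i) (set_coord4 i)).

Lemma annihilated_by_slot4 i K a b : (K - a%:M) *m (K - b%:M) = 0 ->
  annihilated_by (slot4 i K) [:: a; b].
Proof.
by apply: annihilated_by_slot; case: i => [[|[|[|[|//]]]] ?] [[[p q] r] s].
Qed.

Lemma commuting_slot4 i j K K' : i != j -> commuting (slot4 i K) (slot4 j K').
Proof.
by case: i j => [[|[|[|[|//]]]] ?] [[|[|[|[|//]]]] ?] // _;
  apply: commuting_slot => [[[[p q] r] s]|[[[p q] r] s]|[[[p q] r] s]].
Qed.

Local Notation ord4 k := (@Ordinal 4 k isT).

Lemma actWeyl_slots (A : 'M[R]_(1 + n)) :
  actWeyl A =1 slot4 (ord4 0) (Cm A) \+ slot4 (ord4 1) (Cm A)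
               \+ slot4 (ord4 2) (Bm A) \+ slot4 (ord4 3) (Cm A).
Proof. by move=> T; apply/ffunP => -[[[p q] r] s]; rewrite !ffunE /= !big_split. Qed.

Lemma annihilated_by_actWeyl (A : 'M[R]_(1 + n)) a b c d :
  (Cm A - a%:M) *m (Cm A - b%:M) = 0 -> (Bm A - c%:M) *m (Bm A - d%:M) = 0 ->
  a != b -> c != d ->
  annihilated_by (actWeyl A)
    (sumset (sumset (sumset [:: a; b] [:: a; b]) [:: c; d]) [:: a; b]).
Proof.
move=> CC BB ab cd T; rewrite (eq_prod_shift _ (actWeyl_slots A)).
have uab : uniq [:: a; b] by rewrite /= inE ab.
have ucd : uniq [:: c; d] by rewrite /= inE cd.
have com i j K K' : i != j -> commuting (slot4 i K) (slot4 j K') by exact: commuting_slot4.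
apply: annihilated_by_add; rewrite ?sumset_uniq //; last exact: annihilated_by_slot4.
  by apply: commuting_addl; [apply: commuting_addl|]; apply: com.
apply: annihilated_by_add; rewrite ?sumset_uniq //; last exact: annihilated_by_slot4.
  by apply: commuting_addl; apply: com.
by apply: annihilated_by_add => //; [exact: com | exact: annihilated_by_slot4 ..].
Qed.

Fact actWeyl_is_linear (A : 'M[R]_(1 + n)) : linear (actWeyl A).
Proof. by move=> c S T; rewrite !actWeyl_slots linearP. Qed.

HB.instance Definition _ (A : 'M[R]_(1 + n)) :=
  GRing.isLinear.Build R _ _ *:%R (actWeyl A) (actWeyl_is_linear A).

End WeylSlots.

Section WeylInvariance.
Variables (R : realType) (n : nat) (A : 'M[R]_(1 + n)) (T : tens4 R n).
Local Notation C := (Cm A).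
Local Notation B := (Bm A).

Lemma actWeyl_antisym :
  (forall i j k l, T (i, j, k, l) = - T (j, i, k, l)) ->
  forall i j k l, actWeyl A T (i, j, k, l) = - actWeyl A T (j, i, k, l).
Proof.
move=> HA i j k l; rewrite !ffunE /= -sumrN; apply: eq_bigr => m _.
by rewrite (HA m i k l) (HA j m k l) (HA j i m l) (HA j i k m); ring.
Qed.

Lemma actWeyl_bianchi :
  (forall i j k l, T (i, j, k, l) + T (j, l, k, i) + T (l, i, k, j) = 0) ->
  forall i j k l,
    actWeyl A T (i, j, k, l) + actWeyl A T (j, l, k, i) + actWeyl A T (l, i, k, j) = 0.
Proof.
move=> HB i j k l; have cyc p q r s : T (p, q, r, s) = - (T (q, s, r, p) + T (s, p, r, q)).
  by apply/eqP; rewrite -addr_eq0 addrA HB.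
rewrite !ffunE /= -!big_split /=; apply: big1 => m _.
by rewrite (cyc m j k l) (cyc i m k l) (cyc i j k m) (cyc i j m l); ring.
Qed.

Lemma sum_mul_contract0 (c : 'I_n -> R) (S : 'I_n -> 'I_n -> R) :
  (forall m, \sum_k S m k = 0) -> \sum_k \sum_m c m * S m k = 0.
Proof. by move=> S0; rewrite exchange_big big1 // => m _; rewrite -mulr_sumr S0 mulr0. Qed.

Hypothesis CB : forall p i, C p i = - B i p.

(* The dual actions on g_1 and g_{-1} cancel in a contraction. *)
Lemma contract_dual (S : 'I_n -> 'I_n -> R) :
  \sum_k \sum_m B k m * S m k + \sum_k \sum_m C k m * S k m = 0.
Proof.
rewrite [X in _ + X]exchange_big -big_split; apply: big1 => k _.
by rewrite -big_split; apply: big1 => m _ /=; rewrite CB mulNr addrN.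
Qed.

Lemma actWeyl_trace34 :
  (forall i j, \sum_k T (i, j, k, k) = 0) ->
  forall i j, \sum_k actWeyl A T (i, j, k, k) = 0.
Proof.
move=> H i j; under eq_bigr => k _ do rewrite ffunE /= !big_split /=.
rewrite !big_split /= [X in X + _ + _ + _]sum_mul_contract0 //.
by rewrite [X in _ + X + _ + _]sum_mul_contract0 // !add0r contract_dual.
Qed.

Lemma actWeyl_trace13 :
  (forall j l, \sum_k T (k, j, k, l) = 0) ->
  forall j l, \sum_k actWeyl A T (k, j, k, l) = 0.
Proof.
move=> H j l; under eq_bigr => k _ do rewrite ffunE /= !big_split /=.
rewrite !big_split /= [X in _ + X + _ + _]sum_mul_contract0 //.
rewrite [X in _ + _ + _ + X]sum_mul_contract0 // addr0 addr0 addrC.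
exact: contract_dual.
Qed.

Lemma actWeyl_trace23 :
  (forall i l, \sum_k T (i, k, k, l) = 0) ->
  forall i l, \sum_k actWeyl A T (i, k, k, l) = 0.
Proof.
move=> H i l; under eq_bigr => k _ do rewrite ffunE /= !big_split /=.
rewrite !big_split /= [X in X + _ + _ + _]sum_mul_contract0 //.
rewrite [X in _ + _ + _ + X]sum_mul_contract0 // add0r addr0 addrC.
exact: contract_dual.
Qed.

End WeylInvariance.

Section WeylSubspace.
Variables (R : realType) (n : nat).
Implicit Types (S T : tens4 R n).

Lemma inWeyl_scale c T : inWeyl T -> inWeyl (c *: T).
Proof.
move=> [HA [H1 [HB [H2 H3]]]]; split; [|split; [|split; [|split]]].
- by move=> i j k l; rewrite !ffunE HA scalerN.
- by move=> i j; under eq_bigr => k _ do rewrite ffunE; rewrite -scaler_sumr H1 scaler0.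
- by move=> i j k l; rewrite !ffunE -!scalerDr HB scaler0.
- by move=> j l; under eq_bigr => k _ do rewrite ffunE; rewrite -scaler_sumr H2 scaler0.
- by move=> i l; under eq_bigr => k _ do rewrite ffunE; rewrite -scaler_sumr H3 scaler0.
Qed.

Lemma inWeyl_sub S T : inWeyl S -> inWeyl T -> inWeyl (S - T).
Proof.
move=> [HA [H1 [HB [H2 H3]]]] [HA' [H1' [HB' [H2' H3']]]].
split; [|split; [|split; [|split]]].
- by move=> i j k l; rewrite !ffunE HA HA' opprB addrC opprK.
- by move=> i j; under eq_bigr => k _ do rewrite !ffunE; rewrite sumrB H1 H1' subrr.
- by move=> i j k l; rewrite !ffunE; have := HB i j k l; have := HB' i j k l; lra.
- by move=> j l; under eq_bigr => k _ do rewrite !ffunE; rewrite sumrB H2 H2' subrr.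
- by move=> i l; under eq_bigr => k _ do rewrite !ffunE; rewrite sumrB H3 H3' subrr.
Qed.

End WeylSubspace.

Lemma inWeyl_actWeyl (R : realType) n (A : 'M[R]_(1 + n)) T :
  (forall p i, Cm A p i = - Bm A i p) -> inWeyl T -> inWeyl (actWeyl A T).
Proof.
move=> CB [HA [H1 [HB [H2 H3]]]]; split; first exact: actWeyl_antisym.
split; first exact: actWeyl_trace34.
split; first exact: actWeyl_bianchi.
by split; [exact: actWeyl_trace13 | exact: actWeyl_trace23].
Qed.

Section CottonYork.
Variables (R : realType) (n : nat).
Local Notation I3 := ('I_n * 'I_n * 'I_n)%type.

Definition coord3 (i : 'I_3) (t : I3) : 'I_n :=
  let: (p, q, s) := t in match val i with 0 => p | 1 => q | _ => s end%N.

Definition set_coord3 (i : 'I_3) (t : I3) (m : 'I_n) : I3 :=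
  let: (p, q, s) := t in
  match val i with 0 => (m, q, s) | 1 => (p, m, s) | _ => (p, q, m) end%N.

Local Notation slot3 i := (@slot R n _ (coord3 i) (set_coord3 i)).
Local Notation ord3 k := (@Ordinal 3 k isT).

Lemma annihilated_by_slot3 i K a b : (K - a%:M) *m (K - b%:M) = 0 ->
  annihilated_by (slot3 i K) [:: a; b].
Proof. by apply: annihilated_by_slot; case: i => [[|[|[|//]]] ?] [[p q] s]. Qed.

Lemma commuting_slot3 i j K K' : i != j -> commuting (slot3 i K) (slot3 j K').
Proof.
by case: i j => [[|[|[|//]]] ?] [[|[|[|//]]] ?] // _;
  apply: commuting_slot => [[[p q] s]|[[p q] s]|[[p q] s]].
Qed.

Lemma actCY_slots (A : 'M[R]_(1 + n)) :
  actCY A =1 slot3 (ord3 0) (Cm A) \+ slot3 (ord3 1) (Cm A) \+ slot3 (ord3 2) (Cm A).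
Proof. by move=> T; apply/ffunP => -[[p q] s]; rewrite !ffunE /= !big_split. Qed.

Fact actCY_is_linear (A : 'M[R]_(1 + n)) : linear (actCY A).
Proof. by move=> c S T; rewrite !actCY_slots linearP. Qed.

HB.instance Definition _ (A : 'M[R]_(1 + n)) :=
  GRing.isLinear.Build R _ _ *:%R (actCY A) (actCY_is_linear A).

Lemma annihilated_by_actCY (A : 'M[R]_(1 + n)) a b :
  (Cm A - a%:M) *m (Cm A - b%:M) = 0 -> a != b ->
  annihilated_by (actCY A) (sumset (sumset [:: a; b] [:: a; b]) [:: a; b]).
Proof.
move=> CC ab T; rewrite (eq_prod_shift _ (actCY_slots A)).
have uab : uniq [:: a; b] by rewrite /= inE ab.
have com i j K K' : i != j -> commuting (slot3 i K) (slot3 j K') by exact: commuting_slot3.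
apply: annihilated_by_add; rewrite ?sumset_uniq //; last exact: annihilated_by_slot3.
  by apply: commuting_addl; apply: com.
by apply: annihilated_by_add => //; [exact: com | exact: annihilated_by_slot3 ..].
Qed.

Lemma inCY_scale c (T : tens3 R n) : inCY T -> inCY (c *: T).
Proof. by move=> HA i j l; rewrite !ffunE HA scalerN. Qed.

Lemma inCY_sub (S T : tens3 R n) : inCY S -> inCY T -> inCY (S - T).
Proof. by move=> HA HA' i j l; rewrite !ffunE HA HA' opprB addrC opprK. Qed.

Lemma inCY_actCY (A : 'M[R]_(1 + n)) T : inCY T -> inCY (actCY A T).
Proof.
move=> HA i j l; rewrite !ffunE /= -sumrN; apply: eq_bigr => m _.
by rewrite (HA m i l) (HA j m l) (HA j i m); ring.
Qed.

End CottonYork.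

Lemma W_claims_of_positive (R : realType) n (Z : 'rV[R]_n) (V : lmodType R) (P : V -> Prop)
    (act : 'M[R]_(1 + n) -> V -> V) :
  (exists X, inT Z X) ->
  (forall X, inT Z X -> let f := act (br (g1 Z) (gm1 X)) in
     diag_on P f /\ forall w, in_st P f w -> w = 0) ->
  W_claims Z P act.
Proof.
move=> [X0 TX0] pos; split; first by move=> X /pos [].
split=> [X /pos [_ st0] w ss | w st]; last exact: (pos X0 TX0).2 _ (st X0 TX0).
by apply: st0; apply: sum_of_eigW ss _ => l u /ltW.
Qed.

Section PositiveSpectrum.
Variables (R : realType) (n : nat) (Z : 'rV[R]_n) (X : 'cV[R]_n) (hZX : pair Z X = 1).
Local Notation A := (br (g1 Z) (gm1 X)).

Lemma actWeyl_positive :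
  diag_on (@inWeyl R n) (actWeyl A) /\ forall w, in_st (@inWeyl R n) (actWeyl A) w -> w = 0.
Proof.
have ann := annihilated_by_actWeyl (Cm_brZX_roots hZX) (Bm_brZX_roots hZX).
apply: (@positive_spectrum _ (tens4 R n) (actWeyl A) _ (@inWeyl_scale R n)
  (@inWeyl_sub R n) _ _ (sumset_uniq _ _) (ann _ _)).
- by move=> T; apply: inWeyl_actWeyl; exact: Cm_Bm_brZX hZX.
- by apply/eqP; lra.
- by apply/eqP; lra.
have ge1 (x : R) : x \in [:: 1; 2] -> 1 <= x by apply: mem_seq2_ge; lra.
have gem2 (x : R) : x \in [:: -1; -2] -> -2 <= x by apply: mem_seq2_ge; lra.
move=> l /(sumset_ge (sumset_ge (sumset_ge ge1 ge1) gem2) ge1); lra.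
Qed.

Lemma actCY_positive :
  diag_on (@inCY R n) (actCY A) /\ forall w, in_st (@inCY R n) (actCY A) w -> w = 0.
Proof.
have ann := annihilated_by_actCY (Cm_brZX_roots hZX).
apply: (@positive_spectrum _ (tens3 R n) (actCY A) _ (@inCY_scale R n)
  (@inCY_sub R n) (@inCY_actCY R n A) _ (sumset_uniq _ _) (ann _)).
  by apply/eqP; lra.
have ge1 (x : R) : x \in [:: 1; 2] -> 1 <= x by apply: mem_seq2_ge; lra.
move=> l /(sumset_ge (sumset_ge ge1 ge1) ge1); lra.
Qed.

End PositiveSpectrum.

Theorem lemma3p2 (R : realType) (n : nat) (hn : (2 <= n)%N)
    (Z : 'rV[R]_n) (hZ : Z != 0) :
  (forall X, inC Z X <-> X = 0) /\
  (forall X, inC Z X -> inF Z X) /\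
  (forall X, inF Z X <-> pair Z X = 0) /\
  (forall X, inT Z X <-> pair Z X = 1) /\
  (forall X, inT Z X ->
     forall Y : 'cV[R]_n,
       sum_of_eig (fun l Y' => br (br (g1 Z) (gm1 X)) (gm1 Y') = l *: gm1 Y')
         (fun _ => True) Y) /\
  (forall X, inT Z X ->
     (forall (l : R) (Y : 'cV[R]_n), Y != 0 ->
        br (br (g1 Z) (gm1 X)) (gm1 Y) = l *: gm1 Y -> l <= 0) /\
     (forall Y, br (br (g1 Z) (gm1 X)) (gm1 Y) = 0 <-> inC Z Y)) /\
  ((2 < n)%N -> W_claims Z (@inWeyl R n) (@actWeyl R n)) /\
  (n = 2%N -> W_claims Z (@inCY R n) (@actCY R n)).
Proof.
have inT1 X : inT Z X -> pair Z X = 1 by move/(inT_iff hZ).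
have T0 : exists X, inT Z X by have [X ZX] := exists_inT hZ; exists X; apply/inT_iff.
split; first exact: inC_iff.
split; first by move=> X /(inC_iff hZ) ->; apply/inF_iff; rewrite pair0r.
split; first exact: inF_iff.
split; first exact: inT_iff.
split; first by move=> X /inT1 /sum_of_eig_brZX_gm1.
split.
  move=> X /inT1 ZX; split=> [l Y Y0 /(eigenvalue_brZX_gm1 ZX Y0) | Y].
    by case=> ->; lra.
  by rewrite (kernel_brZX_gm1 ZX) (inC_iff hZ).
split=> _; apply: W_claims_of_positive => // X /inT1 ZX.
  exact: actWeyl_positive.
exact: actCY_positive.
Qed.
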